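(* Let $(X,\mathcal{R})$ be a commutative $d$-class association scheme and let $\mathbf{x}\in\mathbb{Q}^X$ be a nonzero vector (the characteristic vector of a nonempty subset $C\subseteq X$, or more generally of a rationally weighted subset $C$), with inner distribution $a=[a_0,\ldots,a_d]$, $a_i=\mathbf{x}^\top A_i\mathbf{x}/\mathbf{x}^\top\mathbf{x}$, and let $T(C)=\{j: E_j\mathbf{x}=0\}$. Then: (i) if $j\in T(C)$ and $\sigma\in\Sigma_\mathbb{Q}$, then $j^\sigma\in T(C)$; hence $T(C)$ is a union of orbits $\mathcal{Q}_j\in\{\mathcal{Q}_1,\ldots,\mathcal{Q}_e\}$; (ii) if $\iota(i)=\iota(j)$ and $aQ_i=0$, then $aQ_j=0$; equivalently, if $E_i\mathbf{x}=0$ then $E_j\mathbf{x}=0$; (iii) if $aQ_i=0$ then $a\overline{Q}_{\iota(i)}=0$; equivalently, if $E_i\mathbf{x}=0$ then $F_{\iota(i)}\mathbf{x}=0$. Here $Q_i$ denotes column $i$ of $Q$ and $\overline{Q}_\ell$ column $\ell$ of $\overline{Q}$.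
   Context: A (commutative) association scheme is a pair $(X,\mathcal{R})$ with $X$ a nonempty finite set and $\mathcal{R}=\{R_0,\ldots,R_d\}$ a partition of $X\times X$ such that $R_0$ is the identity relation, each transpose $R_i^\top$ is some $R_{i'}$, and there are numbers $p_{ij}^k=p_{ji}^k$ such that for every $(a,b)\in R_k$ the number of $c$ with $(a,c)\in R_i$, $(c,b)\in R_j$ is $p_{ij}^k$. Its adjacency matrices $A_0,\ldots,A_d$ are the $0/1$ matrices of the $R_i$; their complex span has a unique basis of primitive idempotents $E_0,\ldots,E_d$ ($E_iE_j=\delta_{ij}E_i$, $\sum_jE_j=I$, $E_0=\frac1{|X|}J$). The second eigenmatrix $Q=[Q_{ij}]_{i,j=0}^d$ is defined by $E_j=\frac1{|X|}\sum_{i=0}^dQ_{ij}A_i$. The splitting field $\mathbb{F}$ is $\mathbb{Q}$ with all eigenvalues of $A_1,\ldots,A_d$ adjoined. Each $\boldsymbol\sigma\in\mathrm{Gal}(\mathbb{F}/\mathbb{Q})$, applied entrywise, maps $E_j$ to a primitive idempotent $E_{j^\sigma}$, defining a permutation $\sigma$ of $\{0,\ldots,d\}$; $\Sigma_\mathbb{Q}$ is the group of these permutations. Let $\mathcal{Q}_0=\{0\},\mathcal{Q}_1,\ldots,\mathcal{Q}_e$ be the orbits of $\Sigma_\mathbb{Q}$ on $\{0,\ldots,d\}$, define $\iota:\{0,\ldots,d\}\to\{0,\ldots,e\}$ by $\iota(i)=\ell$ if $i\in\mathcal{Q}_\ell$, let $F_\ell=\sum_{i\in\mathcal{Q}_\ell}E_i$,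 and let $\overline{Q}=QO$ where $O$ is the $(d+1)\times(e+1)$ matrix with $O_{i\ell}=1$ if $i\in\mathcal{Q}_\ell$ and $0$ otherwise. A (possibly weighted) subset $C$ with vector $\mathbf{x}$ is a Delsarte $T$-design if $E_j\mathbf{x}=0$ for all $j\in T$. *)

From HB Require Import structures.
From mathcomp Require Import all_boot all_order all_algebra all_field.
From mathcomp Require Import boolp.
Set Implicit Arguments. Unset Strict Implicit. Unset Printing Implicit Defensive.
Import Order.TTheory GRing.Theory Num.Theory.
Local Open Scope ring_scope.

(* A commutative d-class association scheme on X = 'I_n, given by the map
   rel : X -> X -> 'I_d.+1 sending (a,b) to the index i with (a,b) in R_i. *)
Definition is_comm_assoc_scheme (n d : nat) (rel : 'I_n -> 'I_n -> 'I_d.+1) : Prop :=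
  [/\
      (forall a b, (rel a b == ord0) = (a == b)),
      (* the R_i are the (nonempty) blocks of a partition of X x X *)
      (forall i, exists a b, rel a b = i),
      (forall i, exists i', forall a b, (rel a b == i) = (rel b a == i')),
      (forall i j k, exists p : nat, forall a b, rel a b = k ->
          #|[set c | (rel a c == i) && (rel c b == j)]| = p)
    &
      (forall i j a b, #|[set c | (rel a c == i) && (rel c b == j)]|
                       = #|[set c | (rel a c == j) && (rel c b == i)]|)].

Definition adjmx (n d : nat) (rel : 'I_n -> 'I_n -> 'I_d.+1) (i : 'I_d.+1)
  : 'M[algC]_n := \matrix_(a, b) (rel a b == i)%:R.

Definition prim_idempotents (n d : nat) (rel : 'I_n -> 'I_n -> 'I_d.+1)
  (E : 'I_d.+1 -> 'M[algC]_n) : Prop :=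
  [/\ (forall i j, E i *m E j = if i == j then E i else 0),
      \sum_j E j = 1%:M,
      E ord0 = n%:R^-1 *: const_mx 1,
      (forall j, E j != 0)
    & (forall j, exists c : 'I_d.+1 -> algC, E j = \sum_i c i *: adjmx rel i)].

Definition second_eigenmatrix (n d : nat) (rel : 'I_n -> 'I_n -> 'I_d.+1)
  (E : 'I_d.+1 -> 'M[algC]_n) (Q : 'M[algC]_d.+1) : Prop :=
  forall j, E j = n%:R^-1 *: \sum_i Q i j *: adjmx rel i.

Definition inner_dist (n d : nat) (rel : 'I_n -> 'I_n -> 'I_d.+1)
  (x : 'cV[algC]_n) : 'rV[algC]_d.+1 :=
  \row_i ((x^T *m adjmx rel i *m x) 0 0 / (x^T *m x) 0 0).

(* j is in the Sigma_Q-orbit of i, i.e. j = i^sigma for some Galois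
   automorphism sigma (acting entrywise on E_i). *)
Definition same_orbit (n d : nat) (E : 'I_d.+1 -> 'M[algC]_n) (i j : 'I_d.+1) : Prop :=
  exists sigma : {rmorphism algC -> algC}, map_mx sigma (E i) = E j.

Definition orbit_idem (n d : nat) (E : 'I_d.+1 -> 'M[algC]_n) (i : 'I_d.+1) : 'M[algC]_n :=
  \sum_(k | `[< same_orbit E i k >]) E k.

(* column iota(i) of Qbar = Q O: sum of the columns Q_k over the orbit of i *)
Definition Qbar_col (n d : nat) (E : 'I_d.+1 -> 'M[algC]_n) (Q : 'M[algC]_d.+1)
  (i : 'I_d.+1) : 'cV[algC]_d.+1 :=
  \sum_(k | `[< same_orbit E i k >]) col k Q.

(* The vector x is rational and the adjacency matrices are 0/1, so every field
   automorphism sigma fixes x, the A_i and the inner distribution a.  Applying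
   sigma entrywise to E_j x = 0 (resp. to a Q_j = 0, where column j of Q holds
   the entries of |X| E_j) therefore gives E_(j^sigma) x = 0 (resp.
   a Q_(j^sigma) = 0); summing over an orbit gives the statements for F and
   the columns of Qbar. *)
From HB Require Import structures.
From mathcomp Require Import all_boot all_order all_algebra all_field.
From mathcomp Require Import boolp.
Set Implicit Arguments. Unset Strict Implicit. Unset Printing Implicit Defensive.
Import Order.TTheory GRing.Theory Num.Theory.
Local Open Scope ring_scope.

Section GaloisInvariance.

Variable sigma : {rmorphism algC -> algC}.

Lemma map_ratr_mx m p (M : 'M[rat]_(m, p)) :
  map_mx sigma (map_mx ratr M) = map_mx ratr M.
Proof. by apply/matrixP=> i j; rewrite !mxE fmorph_rat. Qed.

Lemma map_adjmx n d (rel : 'I_n -> 'I_n -> 'I_d.+1) i :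
  map_mx sigma (adjmx rel i) = adjmx rel i.
Proof. by apply/matrixP=> a b; rewrite !mxE rmorph_nat. Qed.

Lemma map_inner_dist n d (rel : 'I_n -> 'I_n -> 'I_d.+1) (x : 'cV_n) :
  map_mx sigma x = x -> map_mx sigma (inner_dist rel x) = inner_dist rel x.
Proof.
move=> x_fixed; apply/matrixP=> p q.
have map_entry (M : 'M[algC]_1) : sigma (M 0 0) = map_mx sigma M 0 0.
  by rewrite mxE.
rewrite [LHS]mxE [in LHS]mxE [RHS]mxE fmorph_div !map_entry !map_mxM.
by rewrite -map_trmx x_fixed map_adjmx.
Qed.

Lemma map_mulmx_eq0 m p r (A : 'M[algC]_(m, p)) (B : 'M[algC]_(p, r)) :
  A *m B = 0 -> map_mx sigma A *m map_mx sigma B = 0.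
Proof. by rewrite -map_mxM => ->; rewrite map_mx0. Qed.

End GaloisInvariance.

Section SecondEigenmatrix.

Variables (n d : nat) (rel : 'I_n -> 'I_n -> 'I_d.+1).
Variables (E : 'I_d.+1 -> 'M[algC]_n) (Q : 'M[algC]_d.+1).
Hypothesis n_gt0 : (0 < n)%N.
Hypothesis rel_surj : forall i, exists a b, rel a b = i.
Hypothesis QE : second_eigenmatrix rel E Q.

Lemma second_eigenmatrixE j p q : Q (rel p q) j = n%:R * E j p q.
Proof.
rewrite QE !mxE summxE mulrA mulfV ?mul1r ?pnatr_eq0 -?lt0n //.
rewrite (bigD1 (rel p q)) //= !mxE eqxx mulr1 big1 ?addr0 // => i.
by rewrite !mxE eq_sym => /negbTE ->; rewrite mulr0.
Qed.

Lemma map_eigenmatrix_col (sigma : {rmorphism algC -> algC}) i j :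
  map_mx sigma (E i) = E j -> map_mx sigma (col i Q) = col j Q.
Proof.
move=> Eij; apply/matrixP=> l q; rewrite !mxE.
have [a [b <-]] := rel_surj l.
by rewrite !second_eigenmatrixE rmorphM rmorph_nat -Eij mxE.
Qed.

End SecondEigenmatrix.

Theorem theorem4p1 (n d : nat) (rel : 'I_n -> 'I_n -> 'I_d.+1)
  (E : 'I_d.+1 -> 'M[algC]_n) (Q : 'M[algC]_d.+1) (xq : 'cV[rat]_n) :
  (0 < n)%N -> is_comm_assoc_scheme rel -> prim_idempotents rel E ->
  second_eigenmatrix rel E Q -> xq != 0 ->
  let x := map_mx ratr xq in
  let a := inner_dist rel x in
  (* (i) T(C) is closed under Sigma_Q *)
  (forall (j k : 'I_d.+1) (sigma : {rmorphism algC -> algC}),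
      E j *m x = 0 -> map_mx sigma (E j) = E k -> E k *m x = 0)
  (* (ii) *)
  /\ (forall i j : 'I_d.+1, same_orbit E i j ->
        (a *m col i Q = 0 -> a *m col j Q = 0) /\ (E i *m x = 0 -> E j *m x = 0))
  (* (iii) *)
  /\ (forall i : 'I_d.+1,
        (a *m col i Q = 0 -> a *m Qbar_col E Q i = 0) /\
        (E i *m x = 0 -> orbit_idem E i *m x = 0)).
Proof.
move=> n_gt0 [_ rel_surj _ _ _] _ QE _ x a.
have x_fixed (sigma : {rmorphism algC -> algC}) : map_mx sigma x = x.
  exact: map_ratr_mx.
have kerE j k (sigma : {rmorphism algC -> algC}) :
    E j *m x = 0 -> map_mx sigma (E j) = E k -> E k *m x = 0.
  by move=> Ejx <-; rewrite -(x_fixed sigma) map_mulmx_eq0.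
have kerQ i j (sigma : {rmorphism algC -> algC}) :
    map_mx sigma (E i) = E j -> a *m col i Q = 0 -> a *m col j Q = 0.
  move=> Eij aQi; rewrite -[a](map_inner_dist rel (x_fixed sigma)).
  by rewrite -(map_eigenmatrix_col n_gt0 rel_surj QE Eij) map_mulmx_eq0.
split; first exact: kerE.
split=> [i j [sigma Eij] | i].
  by split=> [|Eix]; [exact: kerQ Eij | exact: kerE Eix Eij].
split=> [aQi | Eix].
  rewrite /Qbar_col mulmx_sumr big1 // => k /asboolP [sigma Eik].
  exact: kerQ Eik aQi.
rewrite /orbit_idem mulmx_suml big1 // => k /asboolP [sigma Eik].
exact: kerE Eix Eik.
Qed.
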